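(* Let $N\ge2$ and let $a_1,\dots,a_m$ be transpositions in $S_N$ each of the form $(\alpha,N)$ with $1\le\alpha\le N-1$. Let $\pi$ be the partition of $\{1,\dots,m\}$ in which $j,k$ are in the same block iff $a_j=a_k$, and let $\sigma=a_1\cdots a_m$. Then $2|\pi|\ge|\sigma|+m$ if and only if $\pi\in NC_{1,2}(m)$.
   Context: $|\pi|$ is the number of blocks of $\pi$. For a permutation $\sigma$, $|\sigma|$ is the minimal number of transpositions whose product is $\sigma$. A partition of $\{1,\dots,m\}$ is non-crossing if there are no $k_1<l_1<k_2<l_2$ with $k_1,k_2$ in one block and $l_1,l_2$ in a different block. $NC_{1,2}(m)$ is the set of non-crossing partitions of $\{1,\dots,m\}$ all of whose blocks have one or two elements. *)

From mathcomp Require Import all_boot all_fingroup.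
Set Implicit Arguments. Unset Strict Implicit. Unset Printing Implicit Defensive.

Local Open Scope group_scope.

Definition transp_word (T : finType) (s : {perm T}) (k : nat) : bool :=
  [exists ts : k.-tuple (T * T),
     all dpair ts && (s == \prod_(t <- ts) tperm t.1 t.2)].

Lemma transp_word_ex (T : finType) (s : {perm T}) : exists k, transp_word s k.
Proof.
case: (prod_tpermP s) => ts Hs Hd; exists (size ts).
apply/existsP; exists (in_tuple ts); by rewrite /= Hd Hs eqxx.
Qed.

Definition perm_len (T : finType) (s : {perm T}) : nat :=
  ex_minn (transp_word_ex s).

(* Non-crossing partitions with blocks of size 1 or 2 of 'I_m
   (the index set {1..m} shifted to {0..m-1}, order preserved). *)
Definition noncrossing (m : nat) (P : {set {set 'I_m}}) : Prop :=
  forall (B B' : {set 'I_m}), B \in P -> B' \in P -> B != B' ->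
  forall k1 l1 k2 l2 : 'I_m, (k1 < l1)%N -> (l1 < k2)%N -> (k2 < l2)%N ->
  ~ [/\ k1 \in B, k2 \in B, l1 \in B' & l2 \in B'].

Definition NC12 (m : nat) (P : {set {set 'I_m}}) : Prop :=
  partition P [set: 'I_m] /\
  (forall B, B \in P -> (#|B| = 1)%N \/ (#|B| = 2)%N) /\
  noncrossing P.

Definition kernel_partition (m : nat) (U : eqType) (a : 'I_m -> U)
  : {set {set 'I_m}} :=
  [set [set k | a k == a j] | j : 'I_m].

From mathcomp Require Import all_boot all_fingroup.
From mathcomp Require Import zify.
Set Implicit Arguments. Unset Strict Implicit. Unset Printing Implicit Defensive.

(* Write c for N (the ordinal N.-1 of 'I_N) and a_j = (v_j c).
   The labelling v of {0..m-1} is a word w = v_0 ... v_(m-1) over letters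
   different from c, the kernel partition pi has one block per distinct
   letter of w, and
   sigma = (v_0 c)(v_1 c)...(v_(m-1) c) is a "star product" with centre c.
   1. Cayley's formula: |sigma| = N - #cycles(sigma).
   2. Reading w letter by letter, right multiplication by (x c) merges two
      cycles when x is not in the cycle of c, and splits it otherwise.  For an
      NC_{1,2} word the cycle of c consists of c and the "exposed" letters
      (occurring once, not enclosed by a matched pair); this invariant gives
         #cycles + 2 #letters <= N + m,  with equality iff w is NC_{1,2}.
   3. Combining 1 and 2, 2|pi| >= |sigma| + m iff w is NC_{1,2}, and the
      latter is a reformulation of pi being in NC_{1,2}(m). *)

Local Open Scope group_scope.

Section CayleyFormula.
Variable T : finType.
Implicit Types (s : {perm T}) (x y : T).

Lemma porbits1 : #|porbits (1 : {perm T})| = #|T|.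
Proof.
rewrite card_imset // => x y /eqP; rewrite eq_porbit_mem.
by rewrite porbit.unlock cycle1 imset_set1 /aperm perm1 inE => /eqP.
Qed.

Lemma porbits_le s : #|porbits s| <= #|T|.
Proof. exact: leq_imset_card. Qed.

Lemma porbits_tperm_mul x y s : x != y ->
  #|porbits s| <= (#|porbits (tperm x y * s)|).+1.
Proof.
by move=> xy; have := porbits_mul_tperm s x y; rewrite xy; case: (_ \notin _) => /=; lia.
Qed.

Lemma porbits_mul_tperm_r s x y :
  #|porbits (s * tperm x y)| + (x \notin porbit s y).*2 = #|porbits s| + (x != y).
Proof.
have := porbits_mul_tperm s^-1 x y.
by rewrite porbitV -(porbitsV s) -(porbitsV (s * tperm x y)) invMg tpermV.
Qed.

Lemma porbits_split s y : s y != y ->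
  #|porbits (tperm (s y) y * s)| = (#|porbits s|).+1.
Proof.
move=> sy; have := porbits_mul_tperm s (s y) y.
by rewrite (mem_porbit s 1) sy /= addn0 addn1.
Qed.

Lemma porbits_prod_tperm (ts : seq (T * T)) : all dpair ts ->
  #|T| <= #|porbits (\prod_(t <- ts) tperm t.1 t.2)| + size ts.
Proof.
elim: ts => [|t ts IH] /=; first by rewrite big_nil porbits1 addn0.
case/andP => dt /IH; rewrite big_cons addnS => /leq_trans; apply.
by rewrite -addSn leq_add2r porbits_tperm_mul.
Qed.

Lemma tperm_factorization s : exists ts : seq (T * T),
  [/\ size ts = #|T| - #|porbits s|, all dpair ts & s = \prod_(t <- ts) tperm t.1 t.2].
Proof.
move Hn: (#|T| - #|porbits s|) => n; elim: n s Hn => [|n IH] s Hn.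
  case: (pickP (fun y => s y != y)) => [y /= sy | s_id].
    by have := porbits_le (tperm (s y) y * s); rewrite porbits_split //; lia.
  exists [::]; rewrite big_nil; split => //.
  by apply/permP => y; rewrite perm1; apply/eqP/negbFE/s_id.
case: (pickP (fun y => s y != y)) => [y /= sy | s_id]; last first.
  suff s1 : s = 1 by move: Hn; rewrite s1 porbits1 subnn.
  by apply/permP => y; rewrite perm1; apply/eqP/negbFE/s_id.
have := porbits_le (tperm (s y) y * s); rewrite porbits_split // => le_s.
have [|ts [size_ts dts def_s]] := IH (tperm (s y) y * s); first by rewrite porbits_split //; lia.
exists ((s y, y) :: ts); split => /=; [by rewrite size_ts; lia | by rewrite sy |].
by rewrite big_cons -def_s mulgA tperm2 mul1g.
Qed.

Lemma perm_lenE s : perm_len s = #|T| - #|porbits s|.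
Proof.
rewrite /perm_len; case: ex_minnP => k /existsP [ts /andP [dts /eqP def_s]] min_k.
apply/eqP; rewrite eqn_leq; apply/andP; split.
  have [ts' [size_ts' dts' def_s']] := tperm_factorization s.
  apply: min_k; apply/existsP; exists (Tuple (introT eqP size_ts')).
  by rewrite /= dts' def_s' eqxx.
by have := porbits_prod_tperm dts; rewrite -def_s size_tuple; lia.
Qed.

End CayleyFormula.

Local Close Scope group_scope.

Section Words.
Variables (T : eqType) (x0 : T).
Implicit Types (w : seq T) (x y : T).

Definition noncrossing_word w := forall i j k l, i < j -> j < k -> k < l -> l < size w ->
  nth x0 w i = nth x0 w k -> nth x0 w j = nth x0 w l -> nth x0 w i = nth x0 w j.

Definition nc12_word w := (forall y, count_mem y w <= 2) /\ noncrossing_word w.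

Definition covered w k := [exists i : 'I_(size w), exists j : 'I_(size w),
  (i < k < j) && (nth x0 w i == nth x0 w j)].

(* A letter is exposed when it occurs once, at an uncovered position; for a
   noncrossing word these are the letters lying in the cycle of the centre. *)
Definition exposed w y := (count_mem y w == 1) && ~~ covered w (index y w).

Definition exposed_letters w := filter (exposed w) w.

Lemma coveredP w k : reflect
  (exists i j, [/\ i < k, k < j, j < size w & nth x0 w i = nth x0 w j]) (covered w k).
Proof.
apply: (iffP existsP) => [[i /existsP [j /andP [/andP [ik kj] /eqP wij]]] | [i [j [ik kj jw wij]]]].
  by exists i, j; split.
have iw : i < size w by lia.
by exists (Ordinal iw); apply/existsP; exists (Ordinal jw); rewrite /= ik kj wij eqxx.
Qed.

Lemma index_single w y i : count_mem y w = 1 -> i < size w -> nth x0 w i = y ->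
  i = index y w.
Proof.
move=> cnt_y iw wi; have yw : y \in w by rewrite -wi mem_nth.
case: (ltngtP i (index y w)) => // [lt_i_y | lt_y_i].
  by have := before_find x0 lt_i_y; rewrite /= wi eqxx.
have : y \in take i w by rewrite in_take.
move: cnt_y; rewrite -{1}(cat_take_drop i w) count_cat (drop_nth x0 iw) wi /= eqxx.
by rewrite -has_pred1 has_count /=; lia.
Qed.

Lemma nth_rcons_lt w x i : i < size w -> nth x0 (rcons w x) i = nth x0 w i.
Proof. by move=> iw; rewrite nth_rcons iw. Qed.

Lemma nth_rcons_size w x : nth x0 (rcons w x) (size w) = x.
Proof. by rewrite nth_rcons ltnn eqxx. Qed.

Lemma count_mem_rcons w x y : count_mem y (rcons w x) = count_mem y w + (x == y).
Proof. by rewrite -cats1 count_cat /= addn0. Qed.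

Lemma size_undup_rcons w x : size (undup (rcons w x)) = size (undup w) + (x \notin w).
Proof.
rewrite undup_rcons size_rcons size_filter.
have := count_predC (pred1 x) (undup w).
rewrite count_uniq_mem ?undup_uniq // mem_undup.
by case: (x \in w) => /= <-; rewrite ?addn1 ?addn0 ?add1n.
Qed.

Lemma nc12_rcons w x : nc12_word (rcons w x) <-> nc12_word w /\ (x \in w -> exposed w x).
Proof.
rewrite /nc12_word /noncrossing_word size_rcons; split.
  case=> cnt nc; split; first split.
  - by move=> y; have := cnt y; rewrite count_mem_rcons; lia.
  - move=> i j k l ij jk kl lw.
    by have := nc i j k l ij jk kl (leqW lw); rewrite !nth_rcons_lt //; lia.
  move=> xw; apply/andP; split.
    have : 0 < count_mem x w by rewrite -has_count has_pred1.
    by have := cnt x; rewrite count_mem_rcons eqxx => *; apply/eqP; lia.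
  apply/coveredP => -[i [j [i_x x_j jw wij]]].
  have := nc i (index x w) j (size w) i_x x_j jw (ltnSn _).
  rewrite nth_rcons_size !nth_rcons_lt ?nth_index //; try lia.
  move=> /(_ wij erefl) wix.
  by have := before_find x0 i_x; rewrite /= wix eqxx.
case=> -[cnt nc] exp_x; split.
  move=> y; rewrite count_mem_rcons; case: eqP => [<-|]; last by rewrite addn0.
  case xw: (x \in w); first by move: (exp_x xw) => /andP [/eqP -> _].
  by move/count_memPn: (negbT xw) => ->.
move=> i j k l ij jk kl; rewrite ltnS leq_eqVlt => /orP [/eqP def_l | lw]; last first.
  by rewrite !nth_rcons_lt //; try lia; apply: nc.
rewrite def_l nth_rcons_size !nth_rcons_lt; try lia.
move=> wik wj; have xw : x \in w by rewrite -wj mem_nth //; lia.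
case/andP: (exp_x xw) => /eqP cnt_x /coveredP []; exists i, k.
have def_j : j = index x w by apply: index_single cnt_x _ wj; lia.
by rewrite -def_j; split => //; lia.
Qed.

Lemma covered_rcons w x k : k < size w ->
  covered (rcons w x) k = covered w k || (x \in take k w).
Proof.
move=> kw; apply/coveredP/orP => [[i [j [ik kj jw wij]]] | ].
  rewrite size_rcons ltnS leq_eqVlt in jw; case/orP: jw => [/eqP def_j | jw].
    right; move: wij; rewrite def_j nth_rcons_size nth_rcons_lt; last lia.
    by move=> <-; rewrite -(nth_take x0 ik) mem_nth // size_take kw.
  by left; apply/coveredP; exists i, j; rewrite -!(@nth_rcons_lt w x) //; lia.
case=> [/coveredP [i [j [ik kj jw wij]]] | x_before_k].
  have iw : i < size w by lia.
  by exists i, j; rewrite size_rcons !nth_rcons_lt //; split => //; lia.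
have size_k : size (take k w) = k by rewrite size_take kw.
have xk := index_mem x (take k w); rewrite x_before_k size_k in xk.
exists (index x (take k w)), (size w); split; rewrite ?size_rcons //.
rewrite nth_rcons_size nth_rcons_lt; last lia.
by rewrite -(nth_take x0 xk) nth_index.
Qed.

Lemma index_rcons_in w x y : y \in w -> index y (rcons w x) = index y w.
Proof. by move=> yw; rewrite -cats1 index_cat yw. Qed.

Lemma exposed_rcons_new w x : x \notin w ->
  exposed_letters (rcons w x) = rcons (exposed_letters w) x.
Proof.
move=> xw; rewrite /exposed_letters filter_rcons.
have -> : exposed (rcons w x) x.
  rewrite /exposed count_mem_rcons eqxx (count_memPn xw) /=.
  apply/coveredP => -[i [j [_ x_j jw _]]].
  by move: x_j jw; rewrite -cats1 index_cat (negbTE xw) /= eqxx size_cat /=; lia.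
congr rcons; apply: eq_in_filter => y yw.
have xy : (x == y) = false by apply: contraNF xw => /eqP ->.
rewrite /exposed count_mem_rcons xy addn0 index_rcons_in // covered_rcons ?index_mem //.
by rewrite (contraNF (@mem_take _ _ _ _) xw) orbF.
Qed.

Lemma filter_before (P : pred T) w x : x \in w -> P x ->
  (forall y, P y -> count_mem y w = 1) ->
  [seq y <- w | P y && (y \in take (index x w) w)] = take (index x (filter P w)) (filter P w).
Proof.
move=> xw Px single.
set i := index x w; set t := take i w; set d := drop i.+1 w.
have def_w : w = t ++ x :: d.
  by rewrite -{1}(cat_take_drop i w) (drop_nth x0 (_ : i < size w)) ?nth_index ?index_mem.
rewrite {1}def_w [in filter P w]def_w !filter_cat.
have -> : [seq y <- x :: d | P y && (y \in t)] = [::].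
  apply/eqP; rewrite -size_eq0 size_filter -leqn0 leqNgt -has_count.
  apply/hasP => -[y yd /andP [Py yt]].
  have := single y Py; rewrite def_w count_cat.
  by move: yd yt; rewrite -!has_pred1 !has_count; lia.
rewrite cats0 (eq_in_filter (a2 := P)) => [|y ->]; last by rewrite andbT.
rewrite /= Px index_cat mem_filter /t in_take // ltnn andbF /= eqxx addn0.
by rewrite take_size_cat.
Qed.

Lemma exposed_rcons_close w x : x \in w -> exposed w x ->
  exposed_letters (rcons w x) = take (index x (exposed_letters w)) (exposed_letters w).
Proof.
move=> xw /[dup] exp_x /andP [/eqP cnt_x _].
rewrite /exposed_letters -filter_before //; last by move=> y /andP [/eqP].
rewrite filter_rcons.
have -> : exposed (rcons w x) x = false by rewrite /exposed count_mem_rcons cnt_x eqxx.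
apply: eq_in_filter => y yw.
rewrite in_take // /exposed index_rcons_in //.
case: (eqVneq y x) => [->|yx]; first by rewrite count_mem_rcons cnt_x eqxx ltnn andbF.
rewrite count_mem_rcons (eq_sym x) (negbTE yx) addn0 covered_rcons ?index_mem //.
rewrite in_take // negb_or.
have : index y w != index x w.
  by apply: contra yx => /eqP idx; rewrite -(nth_index x0 yw) idx nth_index.
by case: (count_mem y w == 1) (covered w (index y w)) => [] [] //=; lia.
Qed.

End Words.

Local Open Scope group_scope.

Section StarProducts.
Variable T : finType.
Implicit Types (s Q : {perm T}) (c x y z : T) (L S : seq T).

Definition star_prod c L : {perm T} := \prod_(y <- L) tperm y c.

Lemma star_prod_on (A : {set T}) c L : c \in A -> all [in A] L ->
  perm_on A (star_prod c L).
Proof.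
move=> cA; elim: L => [|y L IH] /=; first by rewrite /star_prod big_nil perm_on1.
case/andP => yA /IH onA; rewrite /star_prod big_cons; apply: perm_onM => //.
apply: subset_trans (tperm_on y c) _.
by apply/subsetP => z; rewrite !inE => /orP [] /eqP ->.
Qed.

Lemma star_prod_supp c L : perm_on [set z | z \in c :: L] (star_prod c L).
Proof.
apply: star_prod_on; first by rewrite inE mem_head.
by apply/allP => z zL; rewrite !inE zL orbT.
Qed.

Lemma star_prod_fix c L y : y \notin c :: L -> star_prod c L y = y.
Proof. by move=> yL; apply: out_perm (star_prod_supp c L) _; rewrite inE. Qed.

Lemma star_prod_rcons c L x : star_prod c (rcons L x) = star_prod c L * tperm x c.
Proof. by rewrite /star_prod -cats1 big_cat big_seq1. Qed.

Lemma porbit_stable s c z : z \in porbit s c -> s z \in porbit s c.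
Proof. by case/porbitP => i ->; apply/porbitP; exists i.+1; rewrite expgSr permM. Qed.

Lemma porbit_sub s (O : pred T) c : c \in O -> (forall z, z \in O -> s z \in O) ->
  {subset porbit s c <= O}.
Proof.
move=> cO sO y /porbitP [i ->]; elim: i => [|i IH]; first by rewrite expg0 perm1.
by rewrite expgSr permM; apply: sO.
Qed.

Lemma star_prod_cycle c S : uniq S -> c \notin S ->
  {subset c :: S <= porbit (star_prod c S) c}.
Proof.
elim: S => [|x S IH] /=.
  by move=> _ _ y; rewrite inE => /eqP ->; apply: porbit_id.
case/andP => xS uS; rewrite inE negb_or => /andP [cx cS].
rewrite /star_prod big_cons -/(star_prod c S).
set D := tperm x c * star_prod c S.
have Dc : D c = x by rewrite permM tpermR star_prod_fix // inE negb_or xS eq_sym cx.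
have sub : {subset porbit (star_prod c S) c <= porbit D c}.
  apply: porbit_sub; first exact: porbit_id.
  move=> z zO; case: (eqVneq z c) => [->|zc].
    have -> : star_prod c S c = D x by rewrite permM tpermL.
    by rewrite porbit_stable // -Dc porbit_stable ?porbit_id.
  case: (eqVneq z x) => [->|zx].
    rewrite star_prod_fix; last by rewrite inE negb_or xS eq_sym cx.
    by rewrite -{1}Dc porbit_stable ?porbit_id.
  have -> : star_prod c S z = D z by rewrite permM tpermD // eq_sym.
  exact: porbit_stable.
move=> y; rewrite !inE => /or3P [/eqP ->|/eqP ->|yS].
- exact: porbit_id.
- by rewrite -Dc porbit_stable ?porbit_id.
- by apply: sub; apply: IH => //; rewrite inE yS orbT.
Qed.

Lemma porbit_star_prod c S Q : uniq S -> c \notin S ->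
  (forall y, y \in c :: S -> Q y = y) ->
  porbit (Q * star_prod c S) c =i c :: S.
Proof.
move=> uS cS Qfix.
have sub : {subset porbit (Q * star_prod c S) c <= c :: S}.
  apply: porbit_sub; first exact: mem_head.
  move=> z zS; have szS : star_prod c S z \in c :: S.
    by move: (perm_closed z (star_prod_supp c S)); rewrite !inE => ->; move: zS; rewrite inE.
  by rewrite permM Qfix.
move=> y; apply/idP/idP; first exact: sub.
move=> /(star_prod_cycle uS cS); apply: porbit_sub; first exact: porbit_id.
by move=> z zO; have := porbit_stable zO; rewrite permM Qfix //; apply: sub.
Qed.

Lemma star_prod_conj c x L : c \notin L -> x \notin L -> x != c ->
  (star_prod c L) ^ (tperm x c) = star_prod x L.
Proof.
elim: L => [|y L IH] /=; first by rewrite /star_prod !big_nil conj1g.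
rewrite !inE !negb_or => /andP [cy cL] /andP [xy xL] xc.
by rewrite /star_prod !big_cons conjMg IH // tpermJ tpermR tpermD.
Qed.

Lemma star_prod_close c pre x post :
  uniq (pre ++ x :: post) -> c \notin pre ++ x :: post ->
  star_prod c (pre ++ x :: post) * tperm x c = star_prod x post * star_prod c pre.
Proof.
rewrite cat_uniq => /and3P [_ pre_post /andP [x_post _]].
rewrite mem_cat in_cons !negb_or => /and3P [c_pre c_x c_post].
have -> : star_prod c (pre ++ x :: post) * tperm x c
          = star_prod c pre * (star_prod c post) ^ (tperm x c).
  rewrite {1}/star_prod big_cat big_cons -/(star_prod c pre) -/(star_prod c post).
  by rewrite /conjg tpermV -!mulgA.
rewrite star_prod_conj // 1?eq_sym //.
apply: esym; apply: perm_onC (star_prod_supp x post) (star_prod_supp c pre) _.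
rewrite -setI_eq0; apply/eqP/setP => z; rewrite !inE.
apply/negP => /andP [/orP [/eqP ->|z_post] /orP [/eqP z_c|z_pre]].
- by move: c_x; rewrite z_c eqxx.
- by apply: (negP pre_post); apply/hasP; exists x; rewrite ?mem_head.
- by move: c_post; rewrite -z_c z_post.
- by apply: (negP pre_post); apply/hasP; exists z; rewrite // inE z_post orbT.
Qed.

End StarProducts.

Section CycleOfCentre.
Variables (T : finType) (c : T).
Implicit Types (Q : {perm T}) (x y : T) (w : seq T).

Lemma exposed_letters_sub w y : y \in exposed_letters c w -> y \in w.
Proof. by rewrite mem_filter => /andP []. Qed.

Lemma star_prod_exposed w : c \notin w -> nc12_word c w -> exists Q,
  [/\ star_prod c w = Q * star_prod c (exposed_letters c w),
      uniq (exposed_letters c w) &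
      forall y, (y \notin w) || (y \in exposed_letters c w) -> Q y = y].
Proof.
elim/last_ind: w => [|w x IH].
  by move=> _ _; exists 1; split => [|//|y _]; rewrite ?mul1g ?perm1.
rewrite mem_rcons inE negb_or => /andP [c_x c_w] /nc12_rcons [nc_w exp_x].
have [Q [def_w uS Qfix]] := IH c_w nc_w.
case xw: (x \in w); last first.
  exists Q; rewrite exposed_rcons_new ?xw // star_prod_rcons def_w -mulgA -star_prod_rcons.
  split=> //; first by rewrite rcons_uniq uS andbT; apply: contraFN xw; apply: exposed_letters_sub.
  move=> y; rewrite !mem_rcons !inE negb_or.
  by case: (eqVneq y x) => [->|_] /= y_ok; apply: Qfix; rewrite ?xw.
have xS : x \in exposed_letters c w by rewrite mem_filter exp_x.
rewrite exposed_rcons_close ?exp_x //; move: uS Qfix def_w; set S := exposed_letters c w.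
set pre := take (index x S) S; set post := drop (index x S).+1 S.
have def_S : S = pre ++ x :: post.
  by rewrite /pre /post -{2}(nth_index c xS) -drop_nth ?index_mem // cat_take_drop.
move=> uS Qfix def_w.
have post_S y : y \in post -> y \in S by rewrite def_S mem_cat inE => ->; rewrite !orbT.
exists (Q * star_prod x post); split.
- rewrite star_prod_rcons def_w def_S -mulgA star_prod_close -?def_S ?mulgA //.
  by apply: contra c_w; apply: exposed_letters_sub.
- by move: uS; rewrite def_S cat_uniq => /andP [].
move=> y y_ok; rewrite permM Qfix; last first.
  case/orP: y_ok => [|y_pre]; last by rewrite def_S mem_cat y_pre orbT.
  by rewrite mem_rcons inE negb_or => /andP [_ ->].
apply: star_prod_fix; apply: contraL y_ok; rewrite inE => y_xpost.
move: uS; rewrite def_S cat_uniq => /and3P [_ pre_post _].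
rewrite negb_or negbK mem_rcons inE; apply/andP; split.
  by case/orP: y_xpost => [/eqP ->|/post_S /exposed_letters_sub ->]; rewrite ?eqxx ?orbT.
by apply: contra pre_post => y_pre; apply/hasP; exists y.
Qed.

Lemma porbit_centre w x : c \notin w -> nc12_word c w -> x \in w ->
  (x \in porbit (star_prod c w) c) = exposed c w x.
Proof.
move=> c_w nc_w xw; have [Q [-> uS Qfix]] := star_prod_exposed c_w nc_w.
rewrite porbit_star_prod //.
- have x_c : (x == c) = false by apply: contraNF c_w => /eqP <-.
  by rewrite inE x_c mem_filter xw andbT.
- by apply: contra c_w; apply: exposed_letters_sub.
by move=> y; rewrite inE => /orP [/eqP ->|yS]; apply: Qfix; rewrite ?c_w ?yS ?orbT.
Qed.

End CycleOfCentre.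

Section CountingCycles.
Variables (T : finType) (c : T).
Implicit Types (x : T) (w : seq T).

Lemma fixed_notin_porbit (s : {perm T}) x : s x = x -> x != c -> x \notin porbit s c.
Proof.
move=> sx x_c; rewrite porbit_sym; apply: contra x_c => c_orb.
have /(_ c c_orb) : {subset porbit s x <= pred1 x}.
  by apply: porbit_sub => [|z /eqP ->]; rewrite inE ?sx.
by rewrite /= eq_sym.
Qed.

Lemma star_prod_cycles w : c \notin w ->
  #|porbits (star_prod c w)| + 2 * size (undup w) <= #|T| + size w /\
  (nc12_word c w <-> #|porbits (star_prod c w)| + 2 * size (undup w) = #|T| + size w).
Proof.
elim/last_ind: w => [|w x IH].
  move=> _; rewrite /star_prod big_nil porbits1 /= !addn0; split=> //.
rewrite mem_rcons inE negb_or => /andP [c_x c_w].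
have [IH_le IH_eq] := IH c_w.
have := porbits_mul_tperm_r (star_prod c w) x c.
rewrite -star_prod_rcons eq_sym c_x -mul2n size_undup_rcons size_rcons nc12_rcons.
move: IH_le IH_eq; set P := #|porbits (star_prod c w)|.
set P' := #|porbits (star_prod c (rcons w x))|; set nT := #|T|.
set u := size (undup w); set n := size w => IH_le IH_eq.
case xw: (x \in w) => /=; last first.
  have -> : x \notin porbit (star_prod c w) c.
    by apply: fixed_notin_porbit; rewrite 1?eq_sym // star_prod_fix // inE negb_or eq_sym c_x xw.
  move=> /= cyc; rewrite IH_eq; split; first lia.
  by split=> [[eq_w _] | eq_wx]; [lia | split; [lia | ]].
case/boolP: (x \in porbit _ c) => /= in_orbit cyc.
  split; first lia.
  rewrite IH_eq; split=> [[] | eq]; first lia.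
  have nc_w : nc12_word c w by apply/IH_eq; lia.
  by split=> [|_]; [apply/IH_eq | rewrite -porbit_centre].
split; first lia.
split=> [[nc_w /(_ isT)] | ]; last lia.
by rewrite -porbit_centre // (negbTE in_orbit).
Qed.

Lemma star_prod_nc12 w : c \notin w ->
  perm_len (star_prod c w) + size w <= 2 * size (undup w) <-> nc12_word c w.
Proof.
move=> c_w; have [le eq] := star_prod_cycles c_w; rewrite perm_lenE eq.
move: le (porbits_le (star_prod c w)); set P := #|porbits _|; set nT := #|T|.
by set u := size (undup w); set n := size w => le P_le; split; lia.
Qed.

End CountingCycles.

Local Close Scope group_scope.

Section KernelPartition.
Variables (U : finType) (m : nat) (u : 'I_m -> U) (x0 : U).

Definition label_word : seq U := [seq u j | j <- enum 'I_m].

Lemma size_label_word : size label_word = m.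
Proof. by rewrite size_map size_enum_ord. Qed.

Lemma nth_label_word (k : 'I_m) : nth x0 label_word k = u k.
Proof.
rewrite (nth_map k) ?size_enum_ord //; congr u.
by apply: val_inj; rewrite /= nth_enum_ord.
Qed.

Lemma label_wordP y : reflect (exists j, y = u j) (y \in label_word).
Proof.
apply: (iffP mapP) => [[j _ ->] | [j ->]]; first by exists j.
by exists j; rewrite ?mem_enum.
Qed.

Lemma kernel_block_in j : [set k | u k == u j] \in kernel_partition u.
Proof. by apply/imsetP; exists j. Qed.

Lemma card_kernel_block j : #|[set k | u k == u j]| = count_mem (u j) label_word.
Proof.
rewrite count_map -size_filter -(card_uniqP _); last exact: filter_uniq (enum_uniq _).
by apply: eq_card => k; rewrite inE mem_filter mem_enum andbT /= eq_sym.
Qed.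

Lemma card_kernel_partition : #|kernel_partition u| = size (undup label_word).
Proof.
have -> : kernel_partition u = [set [set k | u k == y] | y in [set y | y \in label_word]].
  apply/setP => B; apply/imsetP/imsetP => [[j _ ->] | [y]].
    by exists (u j); rewrite // inE; apply/label_wordP; exists j.
  by rewrite inE => /label_wordP [j ->] ->; exists j.
rewrite card_in_imset; last first.
  move=> y1 y2; rewrite !inE => /label_wordP [j ->] _ /setP /(_ j).
  by rewrite !inE eqxx => /esym/eqP.
rewrite cardsE -(card_uniqP (undup_uniq _)).
by apply: eq_card => y; rewrite mem_undup.
Qed.

Lemma kernel_partitionP : partition (kernel_partition u) [set: 'I_m].
Proof.
have -> : kernel_partition u = preim_partition u [set: 'I_m].
  apply/setP => B; apply/imsetP/imsetP => -[j _ ->]; exists j => //;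
    by apply/setP => k; rewrite !inE // eq_sym.
exact: preim_partitionP.
Qed.

Lemma kernel_blocks_small :
  (forall B, B \in kernel_partition u -> #|B| = 1 \/ #|B| = 2) <->
  (forall y, count_mem y label_word <= 2).
Proof.
split=> [small y | twice B /imsetP [j _ ->]].
  case yw: (y \in label_word); last by move/count_memPn: (negbT yw) => ->.
  have [j ->] := label_wordP y yw.
  by have := small _ (kernel_block_in j); rewrite card_kernel_block; lia.
have : 0 < count_mem (u j) label_word.
  by rewrite -has_count has_pred1; apply/label_wordP; exists j.
by have := twice (u j); rewrite card_kernel_block; lia.
Qed.

Lemma kernel_noncrossing : noncrossing (kernel_partition u) <-> noncrossing_word x0 label_word.
Proof.
rewrite /noncrossing_word size_label_word; split=> [nc i j k l ij jk kl lm | nc].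
  have im : i < m by lia.
  have jm : j < m by lia.
  have km : k < m by lia.
  rewrite -[i]/(nat_of_ord (Ordinal im)) -[j]/(nat_of_ord (Ordinal jm)).
  rewrite -[k]/(nat_of_ord (Ordinal km)) -[l]/(nat_of_ord (Ordinal lm)) !nth_label_word.
  move=> uik ujl; apply/eqP; apply: contraT => uij; exfalso.
  apply: (nc _ _ (kernel_block_in (Ordinal im)) (kernel_block_in (Ordinal jm)) _
            (Ordinal im) (Ordinal jm) (Ordinal km) (Ordinal lm) ij jk kl).
    by apply: contraNneq uij => /setP /(_ (Ordinal im)); rewrite !inE eqxx => /eqP.
  by rewrite !inE uik ujl !eqxx.
move=> B B' /imsetP [j0 _ ->] /imsetP [j1 _ ->] neq k1 l1 k2 l2 h1 h2 h3 [].
rewrite !inE => /eqP u1 /eqP u2 /eqP u3 /eqP u4.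
have := nc k1 l1 k2 l2 h1 h2 h3 (ltn_ord l2); rewrite !nth_label_word.
rewrite u1 u2 u3 u4 => /(_ erefl erefl) u01.
by move/negP: neq; apply; apply/eqP/setP => k; rewrite !inE u01.
Qed.

Lemma nc12_kernel_partition : NC12 (kernel_partition u) <-> nc12_word x0 label_word.
Proof.
rewrite /NC12 /nc12_word -kernel_blocks_small -kernel_noncrossing.
by split=> [[_ []] | [small nc]]; last split; first split; try exact: kernel_partitionP.
Qed.

End KernelPartition.

Lemma kernel_partition_eq (m : nat) (U V : eqType) (a : 'I_m -> U) (b : 'I_m -> V) :
  (forall j k, (a j == a k) = (b j == b k)) -> kernel_partition a = kernel_partition b.
Proof. by move=> ab; apply: eq_imset => j; apply/setP => k; rewrite !inE ab. Qed.

Lemma star_prod_label_word (T : finType) (c : T) (m : nat) (v : 'I_m -> T) :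
  (\prod_(j < m) tperm (v j) c)%g = star_prod c (label_word v).
Proof. by rewrite /star_prod big_map enumT [index_enum _]unlock. Qed.

Theorem lemma5 (N : nat) (HN : 2 <= N) (m : nat) (a : 'I_m -> {perm 'I_N})
  (Ha : forall j : 'I_m, exists alpha : 'I_N,
          (alpha < N.-1)%N /\
          exists HNlt : (N.-1 < N)%N, a j = tperm alpha (Ordinal HNlt)) :
  (2 * #|kernel_partition a| >= perm_len (\prod_(j < m) a j)%g + m)%N
  <-> NC12 (kernel_partition a).
Proof.
have lt_c : N.-1 < N by lia.
set c := Ordinal lt_c; pose v j := a j c.
have star_a j : a j = tperm (v j) c /\ v j != c.
  rewrite /v; have [alpha [alpha_lt [lt_N def_a]]] := Ha j.
  rewrite def_a (_ : Ordinal lt_N = c); last exact: val_inj.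
  by rewrite tpermR; split=> //; apply: contraTneq alpha_lt => ->; rewrite ltnn.
have -> : kernel_partition a = kernel_partition v.
  apply: kernel_partition_eq => j k; apply/eqP/eqP => [a_jk | v_jk].
    by rewrite /v a_jk.
  by rewrite (star_a j).1 (star_a k).1 v_jk.
have -> : (\prod_(j < m) a j)%g = star_prod c (label_word v).
  by rewrite -star_prod_label_word; apply: eq_bigr => j _; rewrite -(star_a j).1.
have c_w : c \notin label_word v.
  by apply/label_wordP => -[j /esym v_c]; move: (star_a j).2; rewrite v_c eqxx.
rewrite card_kernel_partition (nc12_kernel_partition _ c) -star_prod_nc12 //.
by rewrite size_label_word.
Qed.
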